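(* Let $\mathcal{H}$ be a reproducing kernel Hilbert space of real-valued functions on $\mathbb{R}^p$ with positive definite reproducing kernel $K$ and norm $\|\cdot\|_{\mathcal{H}}$. Let training data $\{(y_i,\mathbf{x}_i)\}_{i=1}^N\subset\mathbb{R}\times\mathbb{R}^p$ be given, set $\mathbf{y}:=[y_1,\dots,y_N]'$, and let $\mathbf{K}\in\mathbb{R}^{N\times N}$ with $[\mathbf{K}]_{ij}=K(\mathbf{x}_i,\mathbf{x}_j)$ be positive definite. Let $\mu\ge0$, $\lambda_1\ge0$, and define $$\mathbf{X}_\mu:=\begin{bmatrix}\mathbf{I}_N-\mathbf{K}(\mathbf{K}+\mu\mathbf{I}_N)^{-1}\\ (\mu\mathbf{K})^{1/2}(\mathbf{K}+\mu\mathbf{I}_N)^{-1}\end{bmatrix}\in\mathbb{R}^{2N\times N}.$$ Let $$\hat{\mathbf{o}}_{\mathrm{Lasso}}\in\arg\min_{\mathbf{o}\in\mathbb{R}^N}\ \|\mathbf{X}_\mu\mathbf{y}-\mathbf{X}_\mu\mathbf{o}\|_2^2+\lambda_1\|\mathbf{o}\|_1 .$$ Then the minimizers $(\hat f,\hat{\mathbf{o}})$ of $$\min_{f\in\mathcal{H},\ \mathbf{o}\in\mathbb{R}^N}\Big[\sum_{i=1}^N (y_i-f(\mathbf{x}_i)-o_i)^2+\mu\|f\|_{\mathcal{H}}^2+\lambda_1\|\mathbf{o}\|_1\Big]$$ are determined by $\hat{\mathbf{o}}_{\mathrm{Lasso}}$ as $\hat{\mathbf{o}}=\hat{\mathbf{o}}_{\mathrm{Lasso}}$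 and $\hat f(\mathbf{x})=\sum_{i=1}^N\hat\beta_iK(\mathbf{x},\mathbf{x}_i)$ with $\hat{\boldsymbol\beta}=(\mathbf{K}+\mu\mathbf{I}_N)^{-1}(\mathbf{y}-\hat{\mathbf{o}}_{\mathrm{Lasso}})$; i.e., this pair is a minimizer of the latter problem.
   Context: $(\mu\mathbf{K})^{1/2}$ denotes the symmetric positive semidefinite square root; $\mathbf{I}_N$ is the $N\times N$ identity. *)

From HB Require Import structures.
From mathcomp Require Import all_boot all_order all_algebra.
From mathcomp Require Import reals.
Set Implicit Arguments. Unset Strict Implicit. Unset Printing Implicit Defensive.
Import Order.TTheory GRing.Theory Num.Theory.
Local Open Scope ring_scope.

Section Defs.
Variables (R : realType) (p : nat).
Notation pt := 'rV[R]_p.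
Notation fn := (pt -> R).

(* positive definite kernel (in the kernel-methods sense): symmetric, and
   every Gram matrix is positive semidefinite *)
Definition pd_kernel (K : pt -> pt -> R) : Prop :=
  (forall x z, K x z = K z x) /\
  (forall (n : nat) (xs : 'I_n -> pt) (c : 'I_n -> R),
      0 <= \sum_(i < n) \sum_(j < n) c i * c j * K (xs i) (xs j)).

Definition hnorm2 (ip : fn -> fn -> R) (f : fn) : R := ip f f.

Definition is_RKHS (H : fn -> Prop) (ip : fn -> fn -> R) (K : pt -> pt -> R)
  : Prop :=
      H (fun _ => 0)
    /\ (forall f g, H f -> H g -> H (fun z => f z + g z))
    /\ (forall a f, H f -> H (fun z => a * f z))
    /\
      (forall f g, H f -> H g -> ip f g = ip g f)
    /\ (forall a f g h, H f -> H g -> H h ->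
          ip (fun z => a * f z + g z) h = a * ip f h + ip g h)
    /\ (forall f, H f -> 0 <= ip f f)
    /\ (forall f, H f -> ip f f = 0 -> f = (fun _ => 0))
    /\
      (forall u : nat -> fn, (forall n, H (u n)) ->
         (forall e : R, 0 < e -> exists M : nat, forall m n : nat,
             (M <= m)%N -> (M <= n)%N ->
             hnorm2 ip (fun z => u m z - u n z) < e) ->
         exists f, H f /\ forall e : R, 0 < e -> exists M : nat,
             forall n : nat, (M <= n)%N -> hnorm2 ip (fun z => u n z - f z) < e)
    /\
      (forall x, H (fun z => K z x))
    /\
      (forall f x, H f -> ip f (fun z => K z x) = f x).

End Defs.

Section MatDefs.
Variables (R : realType) (N : nat).

Definition posdef_mx (A : 'M[R]_N) : Prop :=
  A^T = A /\ forall v : 'cV[R]_N, v != 0 -> 0 < (v^T *m A *m v) 0 0.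

Definition possemidef_mx (A : 'M[R]_N) : Prop :=
  A^T = A /\ forall v : 'cV[R]_N, 0 <= (v^T *m A *m v) 0 0.

Definition is_psd_sqrt (A S : 'M[R]_N) : Prop :=
  possemidef_mx S /\ S *m S = A.

Definition sqnorm2 {m : nat} (v : 'cV[R]_m) : R := \sum_(i < m) v i 0 ^+ 2.
Definition norm1 {m : nat} (v : 'cV[R]_m) : R := \sum_(i < m) `|v i 0|.

(* X_mu = [ I - K (K + mu I)^-1 ; (mu K)^{1/2} (K + mu I)^-1 ], given S = (mu K)^{1/2} *)
Definition X_mu (Km S : 'M[R]_N) (mu : R) : 'M[R]_(N + N, N) :=
  col_mx (1%:M - Km *m invmx (Km + mu%:M)) (S *m invmx (Km + mu%:M)).

End MatDefs.

(* For a fixed outlier vector o the problem in f is kernel ridge regression on the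
   residual r = y - o.  By the representer theorem its minimizer is the kernel
   expansion with coefficients (K + mu I)^-1 r: every competitor f differs from it by
   d with J(f) = J(fhat) + sum_i d(x_i)^2 + mu ||d||^2.  Its optimal value is
   ||X_mu r||^2, because the fitted residual is r - K beta = mu beta and
   mu ||fhat||^2 = beta' (mu K) beta = ||(mu K)^{1/2} beta||^2.  Minimizing over f first
   therefore leaves exactly the Lasso objective in o. *)
From HB Require Import structures.
From mathcomp Require Import all_boot all_order all_algebra.
From mathcomp Require Import reals.
From mathcomp Require Import ring lra.
From Stdlib Require Import FunctionalExtensionality.
Set Implicit Arguments. Unset Strict Implicit. Unset Printing Implicit Defensive.
Import Order.TTheory GRing.Theory Num.Theory.
Local Open Scope ring_scope.

Section KernelExpansion.
Variables (R : realType) (p : nat).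
Variables (H : ('rV[R]_p -> R) -> Prop) (ip : ('rV[R]_p -> R) -> ('rV[R]_p -> R) -> R)
  (K : 'rV[R]_p -> 'rV[R]_p -> R).
Hypothesis rkhs : is_RKHS H ip K.

Definition kernel_expansion {n} (c : 'I_n -> R) (xs : 'I_n -> 'rV[R]_p) :
  'rV[R]_p -> R := fun z => \sum_(i < n) c i * K z (xs i).

Lemma ip0l h : H h -> ip (fun _ => 0) h = 0.
Proof.
move=> Hh; have [H0 [_ [_ [_ [ip_lin _]]]]] := rkhs.
have := ip_lin 1 (fun _ => 0) (fun _ => 0) h H0 H0 Hh.
have -> : (fun z : 'rV[R]_p => 1 * (0 : R) + 0) = (fun _ => 0).
  by apply: functional_extensionality => z; rewrite mul1r addr0.
rewrite mul1r; set t := ip _ h => t_double; lra.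
Qed.

Lemma kernel_expansion_recl n (c : 'I_n.+1 -> R) (xs : 'I_n.+1 -> 'rV[R]_p) :
  kernel_expansion c xs = (fun z => c ord0 * K z (xs ord0) +
    kernel_expansion (fun i => c (lift ord0 i)) (fun i => xs (lift ord0 i)) z).
Proof. by apply: functional_extensionality => z; rewrite /kernel_expansion big_ord_recl. Qed.

Lemma kernel_expansion0 (c : 'I_0 -> R) (xs : 'I_0 -> 'rV[R]_p) :
  kernel_expansion c xs = (fun _ => 0).
Proof. by apply: functional_extensionality => z; rewrite /kernel_expansion big_ord0. Qed.

Lemma kernel_expansion_in n (c : 'I_n -> R) (xs : 'I_n -> 'rV[R]_p) :
  H (kernel_expansion c xs).
Proof.
have [H0 [Hadd [Hscale [_ [_ [_ [_ [_ [Hker _]]]]]]]]] := rkhs.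
elim: n c xs => [|n IH] c xs; first by rewrite kernel_expansion0.
rewrite kernel_expansion_recl; apply: (Hadd (fun z => c ord0 * K z (xs ord0))) => //.
exact: Hscale.
Qed.

Lemma ip_kernel_expansion n (c : 'I_n -> R) (xs : 'I_n -> 'rV[R]_p) h :
  H h -> ip (kernel_expansion c xs) h = \sum_(i < n) c i * h (xs i).
Proof.
have [_ [_ [_ [ip_sym [ip_lin [_ [_ [_ [Hker reproducing]]]]]]]]] := rkhs.
move=> Hh; elim: n c xs => [|n IH] c xs.
  by rewrite kernel_expansion0 ip0l // big_ord0.
rewrite kernel_expansion_recl ip_lin //; last exact: kernel_expansion_in.
by rewrite IH big_ord_recl ip_sym // reproducing.
Qed.

Lemma fun_subE (f g : 'rV[R]_p -> R) :
  (fun z => f z - g z) = (fun z => -1 * g z + f z).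
Proof. by apply: functional_extensionality => z; rewrite mulN1r addrC. Qed.

Lemma fun_sub_in f g : H f -> H g -> H (fun z => f z - g z).
Proof.
have [_ [Hadd [Hscale _]]] := rkhs.
by move=> Hf Hg; rewrite fun_subE; apply: (Hadd (fun z => -1 * g z)) => //; exact: Hscale.
Qed.

Lemma hnorm2_sub f g : H f -> H g ->
  hnorm2 ip (fun z => f z - g z) = hnorm2 ip f - 2 * ip g f + hnorm2 ip g.
Proof.
have [_ [_ [_ [ip_sym [ip_lin _]]]]] := rkhs.
move=> Hf Hg; have := fun_sub_in Hf Hg; rewrite /hnorm2 fun_subE => Hd.
rewrite ip_lin // [ip g _]ip_sym // [ip f _]ip_sym // !ip_lin // [ip f g]ip_sym //.
ring.
Qed.

End KernelExpansion.

Section QuadraticForms.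
Variable R : realType.

Lemma sqnorm2_tmx m (v : 'cV[R]_m) : sqnorm2 v = (v^T *m v) 0 0.
Proof. by rewrite /sqnorm2 mxE; apply: eq_bigr => i _; rewrite !mxE expr2. Qed.

Lemma sqnorm2_col_mx m1 m2 (a : 'cV[R]_m1) (b : 'cV[R]_m2) :
  sqnorm2 (col_mx a b) = sqnorm2 a + sqnorm2 b.
Proof.
by rewrite /sqnorm2 big_split_ord; congr (_ + _); apply: eq_bigr => i _;
  rewrite ?col_mxEu ?col_mxEd.
Qed.

Lemma posdef_add_scalar_unitmx N (A : 'M[R]_N) mu :
  posdef_mx A -> 0 <= mu -> A + mu%:M \in unitmx.
Proof.
move=> [_ A_pos] mu_ge0; rewrite unitmxE unitfE; apply/negP => /det0P [v v_neq0 v_ker].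
have := A_pos v^T; rewrite trmx_eq0 trmxK => /(_ v_neq0).
have : (v *m (A + mu%:M) *m v^T) 0 0 = 0 by rewrite v_ker mul0mx mxE.
rewrite mulmxDr mul_mx_scalar mulmxDl -scalemxAl mxE [X in _ + X]mxE.
have -> : (v *m v^T) 0 0 = sqnorm2 v^T by rewrite sqnorm2_tmx trmxK.
have : 0 <= mu * sqnorm2 v^T.
  by apply: mulr_ge0 => //; apply: sumr_ge0 => i _; exact: sqr_ge0.
lra.
Qed.

End QuadraticForms.

Section KernelRidge.
Variables (R : realType) (p N : nat).
Variables (H : ('rV[R]_p -> R) -> Prop) (ip : ('rV[R]_p -> R) -> ('rV[R]_p -> R) -> R)
  (K : 'rV[R]_p -> 'rV[R]_p -> R) (x : 'I_N -> 'rV[R]_p) (mu : R) (S : 'M[R]_N).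
Hypothesis rkhs : is_RKHS H ip K.
Local Notation Km := (\matrix_(i < N, j < N) K (x i) (x j)).
Hypotheses (Km_posdef : posdef_mx Km) (mu_ge0 : 0 <= mu).

Variable r : 'cV[R]_N.
Local Notation beta := (invmx (Km + mu%:M) *m r).
Local Notation fhat := (kernel_expansion K (fun i => beta i 0) x).

Lemma kernel_ridge_fitted i : fhat (x i) = (Km *m beta) i 0.
Proof. by rewrite mxE; apply: eq_bigr => j _; rewrite !mxE mulrC. Qed.

Lemma kernel_ridge_residual i : r i 0 - fhat (x i) = mu * beta i 0.
Proof.
have unit_Kmu := posdef_add_scalar_unitmx Km_posdef mu_ge0.
have fit_r : (Km + mu%:M) *m beta = r by rewrite mulmxA mulmxV // mul1mx.
by rewrite kernel_ridge_fitted -{1}fit_r mulmxDl mul_scalar_mx mxE addrAC subrr add0r mxE.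
Qed.

Lemma hnorm2_kernel_ridge : hnorm2 ip fhat = \sum_(i < N) beta i 0 * fhat (x i).
Proof. exact/(ip_kernel_expansion rkhs)/(kernel_expansion_in rkhs). Qed.

Lemma sqnorm2_X_mu : is_psd_sqrt (mu *: Km) S ->
  sqnorm2 (X_mu Km S mu *m r) =
  \sum_(i < N) (r i 0 - fhat (x i)) ^+ 2 + mu * hnorm2 ip fhat.
Proof.
move=> [[S_sym _] S_sq]; rewrite /X_mu mul_col_mx sqnorm2_col_mx; congr (_ + _).
  apply: eq_bigr => i _; rewrite mulmxBl mul1mx -mulmxA kernel_ridge_fitted.
  by rewrite !mxE.
rewrite -mulmxA sqnorm2_tmx trmx_mul S_sym mulmxA -(mulmxA beta^T) S_sq.
rewrite -scalemxAr -scalemxAl mxE hnorm2_kernel_ridge -mulmxA; congr (_ * _).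
by rewrite mxE; apply: eq_bigr => i _; rewrite kernel_ridge_fitted mxE.
Qed.

(* The cross terms cancel because r_i - fhat(x_i) = mu beta_i and
   <fhat, g> = sum_i beta_i g(x_i). *)
Lemma kernel_ridge_pythagoras f : H f ->
  \sum_(i < N) (r i 0 - f (x i)) ^+ 2 + mu * hnorm2 ip f =
  \sum_(i < N) (r i 0 - fhat (x i)) ^+ 2 + mu * hnorm2 ip fhat
  + \sum_(i < N) (f (x i) - fhat (x i)) ^+ 2
  + mu * hnorm2 ip (fun z => f z - fhat z).
Proof.
move=> Hf; have Hfhat := kernel_expansion_in rkhs (fun i => beta i 0) x.
rewrite (hnorm2_sub rkhs) // (ip_kernel_expansion rkhs _ _ Hf) hnorm2_kernel_ridge.
have sum_split : \sum_(i < N) (r i 0 - f (x i)) ^+ 2 =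
    \sum_(i < N) (r i 0 - fhat (x i)) ^+ 2 + \sum_(i < N) (f (x i) - fhat (x i)) ^+ 2
    + 2 * mu * (\sum_(i < N) beta i 0 * fhat (x i) - \sum_(i < N) beta i 0 * f (x i)).
  rewrite -sumrB mulr_sumr -!big_split /=; apply: eq_bigr => i _.
  have /eqP := kernel_ridge_residual i; rewrite subr_eq => /eqP ->; ring.
rewrite sum_split; ring.
Qed.

Lemma kernel_ridge_min f : H f ->
  \sum_(i < N) (r i 0 - fhat (x i)) ^+ 2 + mu * hnorm2 ip fhat <=
  \sum_(i < N) (r i 0 - f (x i)) ^+ 2 + mu * hnorm2 ip f.
Proof.
have [_ [_ [_ [_ [_ [ip_ge0 _]]]]]] := rkhs.
move=> Hf; rewrite (kernel_ridge_pythagoras Hf) -addrA lerDl.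
apply: addr_ge0; first by apply: sumr_ge0 => i _; exact: sqr_ge0.
apply/mulr_ge0/ip_ge0 => //; apply: (fun_sub_in rkhs Hf).
exact: (kernel_expansion_in rkhs).
Qed.

End KernelRidge.

Theorem proposition2 (R : realType) (p N : nat)
  (H : ('rV[R]_p -> R) -> Prop) (ip : ('rV[R]_p -> R) -> ('rV[R]_p -> R) -> R)
  (K : 'rV[R]_p -> 'rV[R]_p -> R)
  (y : 'cV[R]_N) (x : 'I_N -> 'rV[R]_p) (mu lambda1 : R)
  (S : 'M[R]_N) (o_lasso : 'cV[R]_N) :
  pd_kernel K -> is_RKHS H ip K ->
  let Km := \matrix_(i < N, j < N) K (x i) (x j) in
  posdef_mx Km ->
  0 <= mu -> 0 <= lambda1 ->
  is_psd_sqrt (mu *: Km) S ->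
  let X := X_mu Km S mu in
  (forall o : 'cV[R]_N,
     sqnorm2 (X *m y - X *m o_lasso) + lambda1 * norm1 o_lasso
     <= sqnorm2 (X *m y - X *m o) + lambda1 * norm1 o) ->
  let beta := invmx (Km + mu%:M) *m (y - o_lasso) in
  let f_hat := fun z : 'rV[R]_p => \sum_(i < N) beta i 0 * K z (x i) in
  let J := fun (f : 'rV[R]_p -> R) (o : 'cV[R]_N) =>
    \sum_(i < N) (y i 0 - f (x i) - o i 0) ^+ 2 + mu * hnorm2 ip f
      + lambda1 * norm1 o in
  H f_hat /\
  forall (f : 'rV[R]_p -> R) (o : 'cV[R]_N), H f -> J f_hat o_lasso <= J f o.
Proof.
(* Positivity of the kernel and of lambda1 enter only through the hypotheses on Km
   and on o_lasso. *)
move=> _ rkhs Km Km_posdef mu_ge0 _ S_sqrt X lasso_min beta f_hat J.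
split=> [|f o Hf]; first exact: (kernel_expansion_in rkhs).
have J_residual g o' : J g o' =
    \sum_(i < N) ((y - o') i 0 - g (x i)) ^+ 2 + mu * hnorm2 ip g + lambda1 * norm1 o'.
  by rewrite /J; congr (_ + _ + _); apply: eq_bigr => i _; rewrite !mxE; congr (_ ^+ 2); ring.
rewrite !J_residual -(sqnorm2_X_mu rkhs (y - o_lasso) S_sqrt).
apply: (le_trans (y := sqnorm2 (X *m (y - o)) + lambda1 * norm1 o)).
  by rewrite !mulmxBr; exact: lasso_min.
rewrite lerD2r (sqnorm2_X_mu rkhs (y - o) S_sqrt).
exact: (kernel_ridge_min rkhs Km_posdef mu_ge0).
Qed.
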